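(* Let $\mathcal M=(\mathbf M^{(\lambda)})_{\lambda>0}$, $\mathbf M^{(\lambda)}=(M^{(\lambda)}_p)_{p\in\mathbb N_0}$, be a weight matrix in dimension $d=1$ such that for every $\lambda>0$: $(M^{(\lambda)}_p)^2\le M^{(\lambda)}_{p-1}M^{(\lambda)}_{p+1}$ for all $p\in\mathbb N$, and $\lim_{p\to\infty}(M^{(\lambda)}_p)^{1/p}=+\infty$. Assume moreover that $\mu^{(\lambda)}_p:=M^{(\lambda)}_p/M^{(\lambda)}_{p-1}$ ($p\in\mathbb N$), $\mu^{(\lambda)}_0:=1$, satisfy $\mu^{(\lambda)}_p\le\mu^{(\kappa)}_p$ for all $p$ whenever $0<\lambda\le\kappa$. Then $\Lambda_{\{\mathcal M\}}$ is nuclear if and only if for every $\lambda>0$ there exist $\kappa\ge\lambda$ and $A\ge1$ with $M^{(\lambda)}_{p+1}\le A^{p+1}M^{(\kappa)}_p$ for all $p\in\mathbb N_0$.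
   Context: A weight matrix (here $d=1$) is a family $(\mathbf M^{(\lambda)})_{\lambda>0}$ of sequences of positive reals $(M^{(\lambda)}_p)_{p\in\mathbb N_0}$ with $M^{(\lambda)}_0=1$ and $M^{(\lambda)}_p\le M^{(\kappa)}_p$ for all $p$ whenever $0<\lambda\le\kappa$. The associated function of $\mathbf M=(M_p)$ is $\omega_{\mathbf M}(t)=\sup_{p\in\mathbb N_0}\log\frac{|t|^p}{M_p}$ (with $0^0=1$). With $\|\mathbf c\|_{\mathbf M,h}:=\sup_{k\in\mathbb N_0}|c_k|e^{\omega_{\mathbf M}(k^{1/2}/h)}$, $\Lambda_{\{\mathcal M\}}$ is the space of sequences $\mathbf c=(c_k)$ with $\|\mathbf c\|_{\mathbf M^{(\lambda)},h}<\infty$ for some $\lambda,h>0$, with the inductive limit topology of the normed spaces $\{\mathbf c:\|\mathbf c\|_{\mathbf M^{(j)},j}<\infty\}$, $j\in\mathbb N$. *)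

From Stdlib Require Import Reals.
From Coquelicot Require Import Coquelicot.
Open Scope R_scope.

Definition cseq := nat -> C.

Definition wmatrix := R -> nat -> R.

Definition is_weight_matrix (M : wmatrix) : Prop :=
  (forall lam, 0 < lam -> M lam 0%nat = 1) /\
  (forall lam p, 0 < lam -> 0 < M lam p) /\
  (forall lam kap p, 0 < lam -> lam <= kap -> M lam p <= M kap p).

(* exp(omega_M(t)) = sup_p t^p / M_p, with 0^0 = 1 (Stdlib pow has 0^0 = 1).
   [wbound Mseq h c B] states ||c||_{M,h} <= B, i.e.
   sup_k |c_k| exp(omega_M(sqrt k / h)) <= B, written out as a double sup. *)
Definition wbound (Mseq : nat -> R) (h : R) (c : cseq) (B : R) : Prop :=
  forall k p : nat, Cmod (c k) * ((sqrt (INR k) / h) ^ p / Mseq p) <= B.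

Definition inLambda (M : wmatrix) (c : cseq) : Prop :=
  exists lam h B, 0 < lam /\ 0 < h /\ wbound (M lam) h c B.

(* Step j of the inductive limit (j >= 1): ||c||_{M^(j), j} < oo. *)
Definition inStep (M : wmatrix) (j : nat) (c : cseq) : Prop :=
  exists B, wbound (M (INR j)) (INR j) c B.

Definition is_seminorm (M : wmatrix) (q : cseq -> R) : Prop :=
  (forall x, inLambda M x -> 0 <= q x) /\
  (forall x y, inLambda M x -> inLambda M y ->
     q (fun k => Cplus (x k) (y k)) <= q x + q y) /\
  (forall (a : C) x, inLambda M x -> q (fun k => Cmult a (x k)) = Cmod a * q x).

(* Continuity for the (locally convex) inductive limit topology of the normed
   steps: a seminorm is continuous iff its restriction to every step is
   continuous, i.e. q c <= C ||c||_{M^(j),j} on step j. *)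
Definition cont_seminorm (M : wmatrix) (q : cseq -> R) : Prop :=
  is_seminorm M q /\
  forall j : nat, (1 <= j)%nat ->
    exists Cst, forall c B, wbound (M (INR j)) (INR j) c B -> q c <= Cst * B.

Definition is_linear_functional (M : wmatrix) (f : cseq -> C) : Prop :=
  forall (a : C) x y, inLambda M x -> inLambda M y ->
    f (fun k => Cplus (Cmult a (x k)) (y k)) = Cplus (Cmult a (f x)) (f y).

(* Nuclearity of Lambda_{M} (Pietsch): every continuous seminorm p is
   prenuclear, i.e. there are a continuous seminorm q, linear functionals f_n
   and a summable sequence c_n >= 0 with |f_n(x)| <= c_n q(x) and
   p(x) <= sum_n |f_n(x)|. *)
Definition Lambda_nuclear (M : wmatrix) : Prop :=
  forall p, cont_seminorm M p ->
    exists (q : cseq -> R) (f : nat -> cseq -> C) (cn : nat -> R),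
      cont_seminorm M q /\
      (forall n, is_linear_functional M (f n)) /\
      (forall n, 0 <= cn n) /\ ex_series cn /\
      (forall n x, inLambda M x -> Cmod (f n x) <= cn n * q x) /\
      (forall x, inLambda M x ->
         ex_series (fun n => Cmod (f n x)) /\
         p x <= Series (fun n => Cmod (f n x))).

From Stdlib Require Import Reals Arith Lra Lia FunctionalExtensionality ClassicalEpsilon Classical.
From Coquelicot Require Import Coquelicot.
Open Scope R_scope.

(* Write W_{lam,h}(k) = exp omega_{M^(lam)}(sqrt k / h), so that Lambda_{M} is the union of
   the weighted l^oo spaces with weights W_{j,j}.
   If M^(lam)_{p+1} <= A^{p+1} M^(kap)_p then sqrt k W_{kap,hA}(k) <= hA W_{lam,h}(k): passing
   to a later step of the inductive limit gains any polynomial decay in k. Hence for a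
   continuous seminorm p the values p(e_k) decay faster than any power of k relative to every
   weight, and p is dominated by the l^1 norm sum_k |c_k| p(e_k), a sum of rank-one
   functionals with summable coefficients; so p is prenuclear.
   Conversely, testing nuclearity on the sup-seminorms sup_k |c_k| v_k shows that
   sum_k v_k / W_{j,j}(k) < oo, and a diagonal choice of v yields a step j with
   sum_k W_{j,j}(k) / W_{lam,1}(k) < oo. As W is nondecreasing in k, this gives
   K W_{j,j}(K) <= L W_{lam,1}(2K). By log-convexity the supremum defining W_{lam,1}(k) is
   attained at p+1 whenever sqrt k <= mu_{p+1}, so evaluating at K ~ mu_{p+1}^2 / 2 yields
   M^(lam)_{p+1} <= A^{p+1} M^(j)_p. *)

(* The junk value 0 is taken when [u] is unbounded above. *)
Definition sup_real (u : nat -> R) : R :=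
  match Sup_seq u with Finite x => x | _ => 0 end.

Lemma sup_real_ub (u : nat -> R) :
  (exists B, forall n, u n <= B) -> forall n, u n <= sup_real u.
Proof.
  intros [B HB] n. unfold sup_real.
  generalize (Sup_seq_correct u). destruct (Sup_seq u) as [l| |]; simpl; intro H.
  - destruct (Rle_or_lt (u n) l) as [h|h]; auto.
    assert (He : 0 < u n - l) by lra.
    destruct (H (mkposreal _ He)) as [H1 _]. specialize (H1 n). simpl in H1. lra.
  - destruct (H B) as [m Hm]. specialize (HB m). lra.
  - specialize (H (u n) n). lra.
Qed.

Lemma sup_real_le (u : nat -> R) B : (forall n, u n <= B) -> sup_real u <= B.
Proof.
  intros HB. unfold sup_real.
  generalize (Sup_seq_correct u). destruct (Sup_seq u) as [l| |]; simpl; intro H.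
  - destruct (Rle_or_lt l B) as [h|h]; auto.
    assert (He : 0 < l - B) by lra.
    destruct (H (mkposreal _ He)) as [_ [m Hm]]. simpl in Hm. specialize (HB m). lra.
  - destruct (H B) as [m Hm]. specialize (HB m). lra.
  - specialize (H (u 0%nat) 0%nat). lra.
Qed.

Lemma sup_real_scal (c : R) (u : nat -> R) : 0 <= c -> (exists B, forall n, u n <= B) ->
  sup_real (fun n => c * u n) = c * sup_real u.
Proof.
  intros Hc Hb. assert (Hub := sup_real_ub u Hb).
  apply Rle_antisym.
  - apply sup_real_le. intros n. apply Rmult_le_compat_l; auto.
  - destruct Hb as [B HB].
    assert (Hcb : exists B', forall n, c * u n <= B') by (exists (c * B); intros n; apply Rmult_le_compat_l; auto).
    destruct (Req_dec c 0) as [->|Hne].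
    + rewrite Rmult_0_l. eapply Rle_trans; [|apply (sup_real_ub _ Hcb 0%nat)]. lra.
    + assert (H : sup_real u <= sup_real (fun n => c * u n) / c).
      { apply sup_real_le. intros n. apply (Rmult_le_reg_l c); [lra|].
        replace (c * (sup_real (fun n => c * u n) / c)) with (sup_real (fun n => c * u n)) by (field; lra).
        apply (sup_real_ub _ Hcb). }
      apply (Rmult_le_compat_l c) in H; [|lra].
      replace (c * (sup_real (fun n => c * u n) / c)) with (sup_real (fun n => c * u n)) in H by (field; lra).
      lra.
Qed.

Lemma nat_gt (r : R) : exists n : nat, r < INR n.
Proof.
  destruct (nfloor_ex (Rmax r 0) (Rmax_r r 0)) as [n Hn].
  exists (S n). rewrite S_INR. generalize (Rmax_l r 0). lra.
Qed.

Lemma exists_nat_ge1 (r : R) : exists n : nat, (1 <= n)%nat /\ r <= INR n.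
Proof. destruct (nat_gt r) as [n Hn]. exists (S n). split; [lia|]. rewrite S_INR. lra. Qed.

Lemma le_of_le_add_div (a b c : R) :
  (forall N : nat, a <= b + c / (INR N + 1)) -> a <= b.
Proof.
  intros H. destruct (Rle_or_lt a b) as [h|h]; auto.
  destruct (nat_gt (Rabs c / (a - b))) as [N HN].
  specialize (H N). assert (HN0 := pos_INR N).
  assert (Hc : c / (INR N + 1) <= Rabs c / (INR N + 1)).
  { apply Rmult_le_compat_r; [apply Rlt_le, Rinv_0_lt_compat; lra|apply Rle_abs]. }
  assert (Rabs c < (a - b) * (INR N + 1)).
  { apply (Rmult_lt_compat_r (a - b)) in HN; [|lra].
    replace (Rabs c / (a - b) * (a - b)) with (Rabs c) in HN by (field; lra). nra. }
  assert (Rabs c / (INR N + 1) < a - b).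
  { apply (Rmult_lt_reg_r (INR N + 1)); [lra|].
    replace (Rabs c / (INR N + 1) * (INR N + 1)) with (Rabs c) by (field; lra). lra. }
  lra.
Qed.

(* [psum a N = a 0 + ... + a (N-1)] has [N] terms, one fewer than [sum_f_R0 a N]. *)
Fixpoint psum (a : nat -> R) (N : nat) : R :=
  match N with O => 0 | S n => psum a n + a n end.

Lemma psum_nonneg a N : (forall k, 0 <= a k) -> 0 <= psum a N.
Proof. intros H; induction N; simpl; [lra|]. specialize (H N); lra. Qed.

Lemma psum_le a b N : (forall k, (k < N)%nat -> a k <= b k) -> psum a N <= psum b N.
Proof.
  induction N; simpl; intros H; [lra|].
  assert (psum a N <= psum b N) by (apply IHN; intros; apply H; lia).
  specialize (H N ltac:(lia)); lra.
Qed.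

Lemma psum_ge_term a N k : (forall k, 0 <= a k) -> (k < N)%nat -> a k <= psum a N.
Proof.
  intros H; induction N; simpl; intros Hk; [lia|].
  destruct (Nat.eq_dec k N) as [->|hn].
  - generalize (psum_nonneg a N H); lra.
  - specialize (IHN ltac:(lia)); specialize (H N); lra.
Qed.

Lemma psum_le_index a N N' : (forall k, 0 <= a k) -> (N <= N')%nat -> psum a N <= psum a N'.
Proof. intros H HN; induction HN; simpl; [lra|]. specialize (H m); lra. Qed.

Lemma psum_sum_f_R0 a n : psum a (S n) = sum_f_R0 a n.
Proof. induction n; simpl; [lra|]. simpl in IHn. rewrite <- IHn. simpl. lra. Qed.

Lemma psum_block_ge g c a b : (a <= b)%nat -> (forall k, (a <= k < b)%nat -> c <= g k) ->
  INR (b - a) * c <= psum g b - psum g a.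
Proof.
  induction 1 as [|m Hm IH]; intros H. { rewrite Nat.sub_diag. simpl. lra. }
  cbn [psum]. replace (S m - a)%nat with (S (m - a)) by lia. rewrite S_INR.
  assert (INR (m - a) * c <= psum g m - psum g a) by (apply IH; intros; apply H; lia).
  specialize (H m ltac:(lia)). lra.
Qed.

Lemma psum_block_ext g g' a b : (a <= b)%nat -> (forall k, (a <= k < b)%nat -> g k = g' k) ->
  psum g b - psum g a = psum g' b - psum g' a.
Proof.
  induction 1 as [|m Hm IH]; intros H; [lra|]. simpl. rewrite (H m) by lia.
  assert (psum g m - psum g a = psum g' m - psum g' a) by (apply IH; intros; apply H; lia).
  lra.
Qed.

Lemma Series_nonneg a : (forall n, 0 <= a n) -> ex_series a -> 0 <= Series a.
Proof.
  intros H He. rewrite <- (Rmult_0_l (Series a)), <- Series_scal_l.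
  apply Series_le; auto. intros n; rewrite Rmult_0_l; split; [lra|auto].
Qed.

Lemma psum_le_Series a N : (forall n, 0 <= a n) -> ex_series a -> psum a N <= Series a.
Proof.
  intros H He. destruct N as [|N]; simpl.
  - apply Series_nonneg; auto.
  - rewrite (Series_incr_n a (S N)) by (auto; lia). simpl. rewrite <- psum_sum_f_R0. simpl.
    assert (0 <= Series (fun k => a (S (N + k)))).
    { apply Series_nonneg; [intros; apply H|]. apply (ex_series_incr_n a (S N)); auto. }
    lra.
Qed.

Lemma term_le_Series a n : (forall n, 0 <= a n) -> ex_series a -> a n <= Series a.
Proof.
  intros H He. eapply Rle_trans; [|apply (psum_le_Series a (S n) H He)].
  apply psum_ge_term; auto.
Qed.

Lemma ex_series_psum_bounded a B : (forall n, 0 <= a n) -> (forall N, psum a N <= B) ->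
  ex_series a.
Proof.
  intros H HB.
  assert (Hinc : forall n, sum_n a n <= sum_n a (S n)).
  { intros n. rewrite !sum_n_Reals. simpl. specialize (H (S n)). lra. }
  destruct (ex_lim_seq_incr _ Hinc) as [l Hl].
  destruct l as [l| |]; [exists l; exact Hl| |]; exfalso; apply is_lim_seq_spec in Hl.
  - destruct (Hl B) as [N HN]. specialize (HN N (le_n _)).
    rewrite sum_n_Reals, <- psum_sum_f_R0 in HN. specialize (HB (S N)). lra.
  - destruct (Hl 0) as [N HN]. specialize (HN N (le_n _)).
    rewrite sum_n_Reals, <- psum_sum_f_R0 in HN. generalize (psum_nonneg a (S N) H). lra.
Qed.

Lemma ex_series_le_nonneg (a b : nat -> R) :
  (forall n, 0 <= a n <= b n) -> ex_series b -> ex_series a.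
Proof.
  intros H. apply (@ex_series_le R_AbsRing R_CompleteNormedModule). intros n.
  unfold norm; simpl; unfold abs; simpl. rewrite Rabs_pos_eq; apply H.
Qed.

Lemma ex_series_inv_sq : ex_series (fun n => / (INR n + 1) ^ 2).
Proof.
  apply (ex_series_psum_bounded _ 2).
  - intros n. apply Rlt_le, Rinv_0_lt_compat, pow_lt. generalize (pos_INR n); lra.
  - assert (H : forall N, psum (fun n => / (INR n + 1) ^ 2) N <= 2 - 2 / (INR N + 1)).
    { induction N; cbn [psum]; [simpl; lra|].
      rewrite S_INR. assert (HN := pos_INR N).
      assert (/ (INR N + 1) ^ 2 <= 2 / (INR N + 1) - 2 / (INR N + 1 + 1)).
      { replace (2 / (INR N + 1) - 2 / (INR N + 1 + 1))
          with (/ ((INR N + 1) * (INR N + 2) / 2)) by (field; lra).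
        apply Rinv_le_contravar; [nra|]. simpl. nra. }
      lra. }
    intros N. specialize (H N). assert (0 <= 2 / (INR N + 1)).
    { apply Rlt_le, Rdiv_lt_0_compat; [lra|]. generalize (pos_INR N); lra. }
    lra.
Qed.

Lemma Series_psum_comm (g : nat -> nat -> R) N : (forall k, ex_series (g k)) ->
  ex_series (fun n => psum (fun k => g k n) N) /\
  psum (fun k => Series (g k)) N = Series (fun n => psum (fun k => g k n) N).
Proof.
  intros Hg. induction N as [|N [He Heq]]; simpl.
  - split; [apply (ex_series_psum_bounded _ 0); [intros; lra|]; intros N; induction N; simpl; lra|].
    rewrite (Series_ext _ (fun n => 0 * g 0%nat n)) by (intros; ring).
    rewrite Series_scal_l. ring.
  - split; [apply (ex_series_plus _ _ He (Hg N))|].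
    rewrite Heq, <- Series_plus; auto.
Qed.

Section Blocks.
Variable Nf : nat -> nat.
Hypothesis Nf0 : Nf 0%nat = 0%nat.
Hypothesis Nf_lt : forall m, (Nf m < Nf (S m))%nat.

Fixpoint block_index (k : nat) : nat :=
  match k with
  | O => O
  | S k' => if Nat.leb (Nf (S (block_index k'))) (S k')
            then S (block_index k') else block_index k'
  end.

Lemma Nf_le m m' : (m <= m')%nat -> (Nf m <= Nf m')%nat.
Proof. induction 1; auto. specialize (Nf_lt m0); lia. Qed.

Lemma block_indexP k : (Nf (block_index k) <= k < Nf (S (block_index k)))%nat.
Proof.
  induction k; simpl.
  - rewrite Nf0. specialize (Nf_lt 0%nat). lia.
  - destruct (Nat.leb_spec (Nf (S (block_index k))) (S k)).
    + specialize (Nf_lt (S (block_index k))). lia.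
    + lia.
Qed.

Lemma block_index_eq m k : (Nf m <= k < Nf (S m))%nat -> block_index k = m.
Proof.
  intros Hk. destruct (block_indexP k) as [H1 H2].
  destruct (lt_eq_lt_dec (block_index k) m) as [[h|h]|h]; auto.
  - assert (Nf (S (block_index k)) <= Nf m)%nat by (apply Nf_le; lia). lia.
  - assert (Nf (S m) <= Nf (block_index k))%nat by (apply Nf_le; lia). lia.
Qed.

Lemma block_index_ge j k : (Nf j <= k)%nat -> (j <= block_index k)%nat.
Proof.
  intros Hk. destruct (block_indexP k) as [H1 H2].
  destruct (le_lt_dec j (block_index k)) as [h|h]; auto.
  assert (Nf (S (block_index k)) <= Nf j)%nat by (apply Nf_le; lia). lia.
Qed.

End Blocks.

Lemma unbounded_psum_blocks (r : nat -> nat -> R) :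
  (forall m k, 0 <= r m k) -> (forall m B, exists N, B < psum (r m) N) ->
  exists Nf : nat -> nat, Nf 0%nat = 0%nat /\ (forall m, (Nf m < Nf (S m))%nat) /\
    forall m, 1 <= psum (r m) (Nf (S m)) - psum (r m) (Nf m).
Proof.
  intros Hr Hunb.
  assert (Hnext : forall m N0, exists N, (N0 < N)%nat /\ psum (r m) N0 + 1 <= psum (r m) N).
  { intros m N0. destruct (Hunb m (psum (r m) N0 + 1)) as [N HN].
    exists N. split; [|lra].
    destruct (le_lt_dec N N0) as [h|h]; auto.
    assert (psum (r m) N <= psum (r m) N0) by (apply psum_le_index; auto). lra. }
  set (nx := fun m N0 => proj1_sig (constructive_indefinite_description _ (Hnext m N0))).
  assert (Hnx : forall m N0, (N0 < nx m N0)%nat /\ psum (r m) N0 + 1 <= psum (r m) (nx m N0)).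
  { intros m N0. unfold nx. destruct (constructive_indefinite_description _ (Hnext m N0)); auto. }
  set (Nf := fix Nf (m : nat) : nat := match m with O => O | S m' => nx m' (Nf m') end).
  assert (NfS : forall m, Nf (S m) = nx m (Nf m)) by reflexivity.
  exists Nf. split; [reflexivity|].
  split; intros m; rewrite NfS; destruct (Hnx m (Nf m)); lia || lra.
Qed.

Definition phase (z : C) : C :=
  if Req_EM_T (Cmod z) 0 then RtoC 1 else Cmult (Cconj z) (RtoC (/ Cmod z)).

Lemma phase_mul z : Cmult (phase z) z = RtoC (Cmod z).
Proof.
  unfold phase. destruct (Req_EM_T (Cmod z) 0) as [h|h].
  - rewrite h. apply Cmod_eq_0 in h. rewrite h. ring.
  - transitivity (Cmult (Cmult z (Cconj z)) (RtoC (/ Cmod z))); [ring|].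
    rewrite <- Cmod2_conj, <- RtoC_mult. f_equal. field. auto.
Qed.

Lemma Cmod_RtoC_nonneg r : 0 <= r -> Cmod (RtoC r) = r.
Proof. intros; rewrite Cmod_R, Rabs_pos_eq; auto. Qed.

Lemma Cmod_phase_le z : Cmod (phase z) <= 1.
Proof.
  unfold phase. destruct (Req_EM_T (Cmod z) 0) as [h|h].
  - rewrite Cmod_1; lra.
  - rewrite Cmod_mult, Cmod_conj, Cmod_RtoC_nonneg.
    + right. field. auto.
    + apply Rlt_le, Rinv_0_lt_compat. generalize (Cmod_ge_0 z); lra.
Qed.

Definition unit_seq (m : nat) : cseq := fun k => if Nat.eqb k m then RtoC 1 else RtoC 0.
Definition trunc_seq (a : cseq) (N : nat) : cseq := fun k => if Nat.ltb k N then a k else RtoC 0.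
Definition tail_seq (x : cseq) (N : nat) : cseq := fun k => if Nat.ltb k N then RtoC 0 else x k.

Lemma trunc_seq_0 (x : cseq) : trunc_seq x 0 = (fun k => Cmult (RtoC 0) (unit_seq 0 k)).
Proof. apply functional_extensionality; intros k. unfold trunc_seq. simpl. ring. Qed.

Lemma trunc_seq_S (x : cseq) N :
  trunc_seq x (S N) = (fun k => Cplus (Cmult (x N) (unit_seq N k)) (trunc_seq x N k)).
Proof.
  apply functional_extensionality; intros k. unfold trunc_seq, unit_seq.
  destruct (Nat.ltb_spec k (S N)), (Nat.eqb_spec k N), (Nat.ltb_spec k N); subst; try lia; ring.
Qed.

Lemma trunc_add_tail (x : cseq) N : x = (fun k => Cplus (trunc_seq x N k) (tail_seq x N k)).
Proof.
  apply functional_extensionality; intros k. unfold trunc_seq, tail_seq.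
  destruct (Nat.ltb_spec k N); ring.
Qed.

(** * The weights and the sequence space *)

Section WeightMatrix.
Variable M : wmatrix.
Hypothesis HW : is_weight_matrix M.
Hypothesis Hlim : forall lam, 0 < lam ->
  is_lim_seq (fun p : nat => Rpower (M lam p) (/ INR p)) p_infty.

Lemma M_pos lam p : 0 < lam -> 0 < M lam p.
Proof. intros; destruct HW as [_ [HM _]]; auto. Qed.

Lemma M_at0 lam : 0 < lam -> M lam 0%nat = 1.
Proof. intros; destruct HW as [HM _]; auto. Qed.

Lemma M_le lam kap p : 0 < lam -> lam <= kap -> M lam p <= M kap p.
Proof. intros; destruct HW as [_ [_ HM]]; auto. Qed.

Lemma pow_div_M_bounded lam t : 0 < lam -> 0 <= t ->
  exists B, forall p, t ^ p / M lam p <= B.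
Proof.
  intros Hl Ht. assert (H := Hlim lam Hl). apply is_lim_seq_spec in H.
  destruct (H (t + 1)) as [N HN].
  assert (Hnn : forall p, 0 <= t ^ p / M lam p).
  { intros p. apply Rmult_le_pos; [apply pow_le; lra|].
    apply Rlt_le, Rinv_0_lt_compat, M_pos; auto. }
  exists (1 + psum (fun p => t ^ p / M lam p) (S N)). intros p.
  assert (Hsum := psum_nonneg _ (S N) Hnn).
  destruct (le_lt_dec p N) as [hp|hp].
  - generalize (psum_ge_term _ (S N) p Hnn ltac:(lia)). lra.
  - specialize (HN p ltac:(lia)). set (y := Rpower (M lam p) (/ INR p)) in *.
    assert (Hy : M lam p = y ^ p).
    { unfold y. rewrite <- Rpower_pow by apply exp_pos.
      rewrite Rpower_mult, Rinv_l, Rpower_1; auto. apply M_pos; auto.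
      apply not_0_INR; lia. }
    rewrite Hy. assert (t ^ p / y ^ p <= 1).
    { apply (Rdiv_le_1 (t ^ p) (y ^ p)); [apply pow_lt; lra|]. apply pow_incr. lra. }
    lra.
Qed.

(* [weight lam h k] is exp (omega_{M^(lam)} (sqrt k / h)); the supremum is finite
   because (M lam p)^(1/p) tends to infinity. *)
Definition wterm (lam h : R) (k p : nat) : R := (sqrt (INR k) / h) ^ p / M lam p.
Definition weight (lam h : R) (k : nat) : R := sup_real (wterm lam h k).

Lemma wterm_nonneg lam h k p : 0 < lam -> 0 < h -> 0 <= wterm lam h k p.
Proof.
  intros. unfold wterm. apply Rmult_le_pos.
  - apply pow_le, Rmult_le_pos; [apply sqrt_pos|]. apply Rlt_le, Rinv_0_lt_compat; auto.
  - apply Rlt_le, Rinv_0_lt_compat, M_pos; auto.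
Qed.

Lemma wterm_le_weight lam h k p : 0 < lam -> 0 < h -> wterm lam h k p <= weight lam h k.
Proof.
  intros. apply sup_real_ub, pow_div_M_bounded; auto.
  apply Rmult_le_pos; [apply sqrt_pos|]. apply Rlt_le, Rinv_0_lt_compat; auto.
Qed.

Lemma weight_le lam h k B : (forall p, wterm lam h k p <= B) -> weight lam h k <= B.
Proof. apply sup_real_le. Qed.

Lemma weight_ge1 lam h k : 0 < lam -> 0 < h -> 1 <= weight lam h k.
Proof.
  intros. generalize (wterm_le_weight lam h k 0 H H0). unfold wterm. simpl.
  rewrite M_at0; auto. lra.
Qed.

Lemma weight_pos lam h k : 0 < lam -> 0 < h -> 0 < weight lam h k.
Proof. intros. generalize (weight_ge1 lam h k H H0). lra. Qed.

Lemma wterm_anti lam lam' h h' k p : 0 < lam -> lam <= lam' -> 0 < h -> h <= h' ->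
  wterm lam' h' k p <= wterm lam h k p.
Proof.
  intros. unfold wterm, Rdiv at 2 4. apply Rmult_le_compat.
  - apply pow_le, Rmult_le_pos; [apply sqrt_pos|]. apply Rlt_le, Rinv_0_lt_compat; lra.
  - apply Rlt_le, Rinv_0_lt_compat, M_pos; lra.
  - apply pow_incr. split.
    + apply Rmult_le_pos; [apply sqrt_pos|]. apply Rlt_le, Rinv_0_lt_compat; lra.
    + apply Rmult_le_compat_l; [apply sqrt_pos|]. apply Rinv_le_contravar; lra.
  - apply Rinv_le_contravar; [apply M_pos; auto|]. apply M_le; auto.
Qed.

Lemma weight_anti lam lam' h h' k : 0 < lam -> lam <= lam' -> 0 < h -> h <= h' ->
  weight lam' h' k <= weight lam h k.
Proof.
  intros. apply weight_le. intros p.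
  apply (Rle_trans _ (wterm lam h k p)); [apply wterm_anti|apply wterm_le_weight]; auto.
Qed.

Lemma weight_mono lam h k k' : 0 < lam -> 0 < h -> (k <= k')%nat ->
  weight lam h k <= weight lam h k'.
Proof.
  intros. apply weight_le. intros p. eapply Rle_trans; [|apply (wterm_le_weight _ _ k' p); auto].
  unfold wterm, Rdiv at 1 3. apply Rmult_le_compat_r.
  - apply Rlt_le, Rinv_0_lt_compat, M_pos; auto.
  - apply pow_incr. split.
    + apply Rmult_le_pos; [apply sqrt_pos|]. apply Rlt_le, Rinv_0_lt_compat; lra.
    + apply Rmult_le_compat_r; [apply Rlt_le, Rinv_0_lt_compat; lra|].
      apply sqrt_le_1_alt, le_INR; auto.
Qed.

Lemma mul_weight_le a lam h k B : 0 < lam -> 0 < h -> 0 <= a ->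
  (forall p, a * wterm lam h k p <= B) -> a * weight lam h k <= B.
Proof.
  intros Hl Hh Ha HB. destruct (Req_dec a 0) as [->|Hne].
  - specialize (HB 0%nat). lra.
  - assert (H : weight lam h k <= B / a).
    { apply weight_le. intros p. apply (Rmult_le_reg_l a); [lra|].
      replace (a * (B / a)) with B by (field; lra). auto. }
    apply (Rmult_le_compat_l a) in H; [|lra].
    replace (a * (B / a)) with B in H by (field; lra). lra.
Qed.

Lemma wbound_nonneg lam h c B : 0 < lam -> 0 < h -> wbound (M lam) h c B -> 0 <= B.
Proof.
  intros Hl Hh H. eapply Rle_trans; [|apply (H 0%nat 0%nat)].
  apply Rmult_le_pos; [apply Cmod_ge_0|apply (wterm_nonneg lam h 0 0); auto].
Qed.

Lemma wbound_weight lam h c B k : 0 < lam -> 0 < h -> wbound (M lam) h c B ->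
  Cmod (c k) * weight lam h k <= B.
Proof. intros Hl Hh H. apply mul_weight_le; [auto|auto|apply Cmod_ge_0|]. intros p; apply H. Qed.

Lemma weight_wbound lam h c B : 0 < lam -> 0 < h ->
  (forall k, Cmod (c k) * weight lam h k <= B) -> wbound (M lam) h c B.
Proof.
  intros Hl Hh H k p. eapply Rle_trans; [|apply (H k)].
  apply Rmult_le_compat_l; [apply Cmod_ge_0|apply wterm_le_weight; auto].
Qed.

Lemma inLambda_step x : inLambda M x ->
  exists j B, (1 <= j)%nat /\ wbound (M (INR j)) (INR j) x B.
Proof.
  intros [lam [h [B [Hl [Hh HB]]]]].
  destruct (exists_nat_ge1 (Rmax lam h)) as [j [Hj Hjr]].
  exists j, B. split; auto. intros k p. eapply Rle_trans; [|apply (HB k p)].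
  apply Rmult_le_compat_l; [apply Cmod_ge_0|].
  apply wterm_anti; auto; generalize (Rmax_l lam h) (Rmax_r lam h); lra.
Qed.

Lemma unit_seq_wbound lam h m : 0 < lam -> 0 < h ->
  wbound (M lam) h (unit_seq m) (weight lam h m).
Proof.
  intros Hl Hh. apply weight_wbound; auto. intros k. unfold unit_seq.
  destruct (Nat.eqb_spec k m) as [->|hne].
  - rewrite Cmod_1. lra.
  - rewrite Cmod_0, Rmult_0_l. apply Rlt_le, weight_pos; auto.
Qed.

Lemma unit_seq_inLambda m : inLambda M (unit_seq m).
Proof. exists 1, 1, (weight 1 1 m). repeat split; try lra. apply unit_seq_wbound; lra. Qed.

Lemma trunc_seq_inLambda a N : inLambda M (trunc_seq a N).
Proof.
  assert (Hnn : forall k, 0 <= Cmod (a k) * weight 1 1 k).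
  { intros k. apply Rmult_le_pos; [apply Cmod_ge_0|apply Rlt_le, weight_pos; lra]. }
  exists 1, 1, (psum (fun k => Cmod (a k) * weight 1 1 k) N). repeat split; try lra.
  apply weight_wbound; try lra. intros k. unfold trunc_seq.
  destruct (Nat.ltb_spec k N) as [hk|hk].
  - apply (psum_ge_term (fun k => Cmod (a k) * weight 1 1 k)); auto.
  - rewrite Cmod_0, Rmult_0_l. apply psum_nonneg; auto.
Qed.

Lemma tail_seq_inLambda x N : inLambda M x -> inLambda M (tail_seq x N).
Proof.
  intros [lam [h [B [Hl [Hh HB]]]]]. exists lam, h, B. repeat split; auto.
  intros k p. unfold tail_seq. destruct (Nat.ltb k N); auto.
  rewrite Cmod_0, Rmult_0_l. apply (wbound_nonneg lam h x B); auto.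
Qed.

Lemma scal_inLambda a x : inLambda M x -> inLambda M (fun k => Cmult a (x k)).
Proof.
  intros [lam [h [B [Hl [Hh HB]]]]]. exists lam, h, (Cmod a * B). repeat split; auto.
  intros k p. rewrite Cmod_mult, Rmult_assoc.
  apply Rmult_le_compat_l; [apply Cmod_ge_0|auto].
Qed.

Lemma linear_functional_zero (f : cseq -> C) : is_linear_functional M f ->
  f (fun _ => RtoC 0) = RtoC 0.
Proof.
  intros Hf. set (Z := fun _ : nat => RtoC 0).
  assert (HZ : inLambda M Z) by apply (trunc_seq_inLambda Z 0).
  assert (H := Hf (RtoC 1) Z Z HZ HZ).
  replace (fun k => Cplus (Cmult (RtoC 1) (Z k)) (Z k)) with Z in H
    by (apply functional_extensionality; intros k; unfold Z; ring).
  apply (f_equal (fun z => Cminus z (f Z))) in H.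
  replace (Cminus (f Z) (f Z)) with (RtoC 0) in H by ring.
  rewrite H. ring.
Qed.

Lemma linear_functional_trunc (f : cseq -> C) (a : cseq) (r : nat -> R) N :
  is_linear_functional M f -> (forall k, Cmult (a k) (f (unit_seq k)) = RtoC (r k)) ->
  f (trunc_seq a N) = RtoC (psum r N).
Proof.
  intros Hf Hr. induction N.
  - apply (linear_functional_zero f Hf).
  - rewrite trunc_seq_S, Hf by (apply unit_seq_inLambda || apply trunc_seq_inLambda).
    rewrite IHN, Hr. simpl. rewrite RtoC_plus. ring.
Qed.

Lemma seminorm_trunc_le pp x N : is_seminorm M pp ->
  pp (trunc_seq x N) <= psum (fun n => Cmod (x n) * pp (unit_seq n)) N.
Proof.
  intros [Hp0 [Hpadd Hphom]]. induction N.
  - rewrite trunc_seq_0, Hphom by apply unit_seq_inLambda. rewrite Cmod_0. simpl; lra.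
  - rewrite trunc_seq_S. simpl psum.
    eapply Rle_trans; [apply Hpadd; [apply scal_inLambda, unit_seq_inLambda|apply trunc_seq_inLambda]|].
    rewrite Hphom by apply unit_seq_inLambda. lra.
Qed.

(** * The growth condition implies nuclearity *)

Section WeightedL1.
Variable w : nat -> R.
Hypothesis w_nonneg : forall n, 0 <= w n.
Hypothesis w_dom : forall j : nat, (1 <= j)%nat -> exists K, forall x B,
  wbound (M (INR j)) (INR j) x B -> forall n, Cmod (x n) * w n <= / (INR n + 1) ^ 2 * (K * B).

Definition weighted_l1 (x : cseq) : R := Series (fun n => Cmod (x n) * w n).

Lemma ex_series_weighted_l1 x : inLambda M x -> ex_series (fun n => Cmod (x n) * w n).
Proof.
  intros Hx. destruct (inLambda_step x Hx) as [j [B [Hj HB]]].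
  destruct (w_dom j Hj) as [K HK].
  apply (ex_series_le_nonneg _ (fun n => / (INR n + 1) ^ 2 * (K * B))).
  - intros n. split; [apply Rmult_le_pos; [apply Cmod_ge_0|auto]|auto].
  - apply ex_series_scal_r, ex_series_inv_sq.
Qed.

Lemma weighted_l1_cont_seminorm : cont_seminorm M weighted_l1.
Proof.
  assert (Hterm : forall x n, 0 <= Cmod (x n) * w n)
    by (intros; apply Rmult_le_pos; [apply Cmod_ge_0|auto]).
  split; [split; [|split]|].
  - intros x Hx. apply Series_nonneg; auto. apply ex_series_weighted_l1; auto.
  - intros x y Hx Hy. unfold weighted_l1. rewrite <- Series_plus by (apply ex_series_weighted_l1; auto).
    apply Series_le; [|apply (ex_series_plus (fun n => Cmod (x n) * w n) (fun n => Cmod (y n) * w n));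
      apply ex_series_weighted_l1; auto].
    intros n. split; [apply (Hterm (fun k => Cplus (x k) (y k)))|]. rewrite <- Rmult_plus_distr_r.
    apply Rmult_le_compat_r; auto. apply Cmod_triangle.
  - intros a x Hx. unfold weighted_l1. rewrite <- Series_scal_l. apply Series_ext.
    intros n. rewrite Cmod_mult. ring.
  - intros j Hj. destruct (w_dom j Hj) as [K HK].
    exists (Series (fun n => / (INR n + 1) ^ 2) * K). intros c B HB.
    eapply Rle_trans.
    + apply (Series_le _ (fun n => / (INR n + 1) ^ 2 * (K * B))).
      * intros n; split; auto.
      * apply ex_series_scal_r, ex_series_inv_sq.
    + rewrite Series_scal_r. right; ring.
Qed.

End WeightedL1.

Section Sufficiency.
Hypothesis Hcond : forall lam, 0 < lam -> exists kap A, lam <= kap /\ 1 <= A /\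
  forall p : nat, M lam (p + 1)%nat <= A ^ (p + 1) * M kap p.

Lemma weight_shift lam h : 0 < lam -> 0 < h -> exists kap h', lam <= kap /\ h <= h' /\
  forall k, (1 + sqrt (INR k)) * weight kap h' k <= (1 + h') * weight lam h k.
Proof.
  intros Hl Hh. destruct (Hcond lam Hl) as [kap [A [Hk [HA HM]]]].
  exists kap, (h * A). split; auto. split; [nra|]. intros k.
  set (s := sqrt (INR k)). assert (Hs : 0 <= s) by apply sqrt_pos.
  assert (Hterm : forall p, s * wterm kap (h * A) k p <= h * A * wterm lam h k (S p)).
  { intros p. unfold wterm. fold s. set (u := s / h).
    assert (Hu : 0 <= u) by (apply Rmult_le_pos; [auto|apply Rlt_le, Rinv_0_lt_compat; auto]).
    assert (HAp : 0 < A ^ p) by (apply pow_lt; lra).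
    assert (Hkp := M_pos kap p ltac:(lra)). assert (Hlp := M_pos lam (S p) Hl).
    replace (s / (h * A)) with (u * / A) by (unfold u; field; lra).
    rewrite Rpow_mult_distr, pow_inv.
    replace (s * (u ^ p * / A ^ p / M kap p)) with (s * u ^ p * / (A ^ p * M kap p)) by (field; lra).
    replace (h * A * (u ^ S p / M lam (S p))) with (s * u ^ p * / (M lam (S p) / A))
      by (simpl; unfold u; field; repeat split; lra).
    apply Rmult_le_compat_l; [apply Rmult_le_pos; [auto|apply pow_le; auto]|].
    apply Rinv_le_contravar; [apply Rdiv_lt_0_compat; lra|].
    specialize (HM p). rewrite Nat.add_1_r in HM. simpl in HM.
    apply (Rmult_le_reg_l A); [lra|].
    replace (A * (M lam (S p) / A)) with (M lam (S p)) by (field; lra). lra. }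
  assert (Hs_weight : s * weight kap (h * A) k <= h * A * weight lam h k).
  { apply mul_weight_le; auto; try nra. intros p. eapply Rle_trans; [apply Hterm|].
    apply Rmult_le_compat_l; [nra|apply wterm_le_weight; auto]. }
  assert (weight kap (h * A) k <= weight lam h k) by (apply weight_anti; auto; nra).
  lra.
Qed.

Lemma weight_shift_iter n lam h : 0 < lam -> 0 < h -> exists kap h' c,
  lam <= kap /\ h <= h' /\ 0 <= c /\
  forall k, (1 + sqrt (INR k)) ^ n * weight kap h' k <= c * weight lam h k.
Proof.
  intros Hl Hh. induction n as [|n [kap [h' [c [Hk [Hh' [Hc Hiter]]]]]]].
  - exists lam, h, 1. repeat split; try lra. intros k. simpl. lra.
  - destruct (weight_shift kap h') as [kap2 [h2 [Hk2 [Hh2 Hshift]]]]; try lra.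
    exists kap2, h2, ((1 + h2) * c). repeat split; try lra; [nra|]. intros k.
    assert (Hsk := sqrt_pos (INR k)).
    assert (Hpow : 0 <= (1 + sqrt (INR k)) ^ n) by (apply pow_le; lra).
    specialize (Hshift k). specialize (Hiter k).
    simpl. rewrite (Rmult_comm (1 + sqrt (INR k))), Rmult_assoc.
    eapply Rle_trans; [apply Rmult_le_compat_l; [auto|apply Hshift]|]. nra.
Qed.

Lemma weight_poly_decay (j n : nat) : (1 <= j)%nat -> exists (j' : nat) c,
  (1 <= j')%nat /\ 0 <= c /\
  forall k, (INR k + 1) ^ n * weight (INR j') (INR j') k <= c * weight (INR j) (INR j) k.
Proof.
  intros Hj. assert (Hj0 : 0 < INR j) by (apply lt_0_INR; lia).
  destruct (weight_shift_iter (2 * n) (INR j) (INR j) Hj0 Hj0)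
    as [kap [h' [c [Hk [Hh [Hc Hiter]]]]]].
  destruct (exists_nat_ge1 (Rmax kap h')) as [j' [Hj' Hr]].
  generalize (Rmax_l kap h') (Rmax_r kap h'); intros.
  exists j', c. repeat split; auto. intros k.
  assert (Hsk := sqrt_pos (INR k)). assert (Hk0 := pos_INR k).
  assert (Hpow : (INR k + 1) ^ n <= (1 + sqrt (INR k)) ^ (2 * n)).
  { rewrite pow_mult. apply pow_incr. split; [lra|].
    simpl. rewrite Rmult_1_r, Rmult_plus_distr_l, !Rmult_plus_distr_r, sqrt_sqrt; nra. }
  eapply Rle_trans; [|apply (Hiter k)]. apply Rmult_le_compat.
  - apply pow_le; lra.
  - apply Rlt_le, weight_pos; lra.
  - auto.
  - apply weight_anti; lra.
Qed.

Section ContinuousSeminorm.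
Variable pp : cseq -> R.
Hypothesis Hp : cont_seminorm M pp.

Lemma unit_values_nonneg n : 0 <= pp (unit_seq n).
Proof. destruct Hp as [[Hp0 _] _]. apply Hp0, unit_seq_inLambda. Qed.

Lemma unit_values_le_weight (j : nat) : (1 <= j)%nat ->
  exists Cs, 0 <= Cs /\ forall n, pp (unit_seq n) <= Cs * weight (INR j) (INR j) n.
Proof.
  intros Hj. assert (Hj0 : 0 < INR j) by (apply lt_0_INR; lia).
  destruct Hp as [_ Hc]. destruct (Hc j Hj) as [Cst HC].
  exists (Rmax Cst 0). split; [apply Rmax_r|]. intros n.
  eapply Rle_trans; [apply HC, unit_seq_wbound; auto|].
  apply Rmult_le_compat_r; [apply Rlt_le, weight_pos; auto|apply Rmax_l].
Qed.

Lemma unit_values_decay (j n : nat) : (1 <= j)%nat -> exists K, forall x B,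
  wbound (M (INR j)) (INR j) x B ->
  forall k, (INR k + 1) ^ n * (Cmod (x k) * pp (unit_seq k)) <= K * B.
Proof.
  intros Hj. assert (Hj0 : 0 < INR j) by (apply lt_0_INR; lia).
  destruct (weight_poly_decay j n Hj) as [j' [c [Hj' [Hc Hdecay]]]].
  destruct (unit_values_le_weight j' Hj') as [Cs [HCs Hpe]].
  exists (Cs * c). intros x B HB k.
  assert (Hxk := Cmod_ge_0 (x k)). assert (Hpow : 0 <= (INR k + 1) ^ n).
  { apply pow_le. generalize (pos_INR k); lra. }
  apply Rle_trans with (Cs * Cmod (x k) * ((INR k + 1) ^ n * weight (INR j') (INR j') k)).
  { replace (Cs * Cmod (x k) * ((INR k + 1) ^ n * weight (INR j') (INR j') k))
      with ((INR k + 1) ^ n * (Cmod (x k) * (Cs * weight (INR j') (INR j') k))) by ring.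
    apply Rmult_le_compat_l; [auto|]. apply Rmult_le_compat_l; auto. }
  apply Rle_trans with (Cs * Cmod (x k) * (c * weight (INR j) (INR j) k)).
  { apply Rmult_le_compat_l; [apply Rmult_le_pos|]; auto. }
  replace (Cs * Cmod (x k) * (c * weight (INR j) (INR j) k))
    with (Cs * c * (Cmod (x k) * weight (INR j) (INR j) k)) by ring.
  apply Rmult_le_compat_l; [apply Rmult_le_pos; auto|]. apply wbound_weight; auto.
Qed.

Lemma tail_seminorm_le (j : nat) : (1 <= j)%nat -> exists E, forall x B,
  wbound (M (INR j)) (INR j) x B -> forall N, pp (tail_seq x N) <= E * B / (INR N + 1).
Proof.
  intros Hj. assert (Hj0 : 0 < INR j) by (apply lt_0_INR; lia).
  destruct (weight_poly_decay j 1 Hj) as [j' [c [Hj' [Hc Hdecay]]]].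
  assert (Hj0' : 0 < INR j') by (apply lt_0_INR; lia).
  destruct Hp as [_ Hpc]. destruct (Hpc j' Hj') as [Cst HC].
  exists (Rmax Cst 0 * c). intros x B HB N.
  assert (HB0 := wbound_nonneg _ _ x B Hj0 Hj0 HB). assert (HN := pos_INR N).
  assert (Htail : wbound (M (INR j')) (INR j') (tail_seq x N) (c * B / (INR N + 1))).
  { apply weight_wbound; auto. intros k. unfold tail_seq.
    destruct (Nat.ltb_spec k N) as [hk|hk].
    - rewrite Cmod_0, Rmult_0_l. apply Rmult_le_pos; [nra|].
      apply Rlt_le, Rinv_0_lt_compat; lra.
    - assert (Hk : INR N <= INR k) by (apply le_INR; lia).
      assert (Hxk := Cmod_ge_0 (x k)). specialize (Hdecay k). rewrite pow_1 in Hdecay.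
      assert (HW' := weight_pos (INR j') (INR j') k Hj0' Hj0').
      assert (HxW := wbound_weight _ _ x B k Hj0 Hj0 HB).
      apply (Rmult_le_reg_r (INR N + 1)); [lra|].
      replace (c * B / (INR N + 1) * (INR N + 1)) with (c * B) by (field; lra).
      apply Rle_trans with (Cmod (x k) * ((INR k + 1) * weight (INR j') (INR j') k)).
      { rewrite (Rmult_comm (INR k + 1)), <- Rmult_assoc.
        apply Rmult_le_compat_l; [apply Rmult_le_pos|]; lra. }
      apply Rle_trans with (Cmod (x k) * (c * weight (INR j) (INR j) k)).
      { apply Rmult_le_compat_l; auto. }
      replace (Cmod (x k) * (c * weight (INR j) (INR j) k))
        with (c * (Cmod (x k) * weight (INR j) (INR j) k)) by ring.
      apply Rmult_le_compat_l; auto. }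
  eapply Rle_trans; [apply HC, Htail|].
  assert (0 <= c * B / (INR N + 1)) by (apply Rmult_le_pos; [nra|apply Rlt_le, Rinv_0_lt_compat; lra]).
  replace (Rmax Cst 0 * c * B / (INR N + 1)) with (Rmax Cst 0 * (c * B / (INR N + 1))) by (field; lra).
  apply Rmult_le_compat_r; [auto|apply Rmax_l].
Qed.

Lemma seminorm_le_l1 x : inLambda M x -> ex_series (fun n => Cmod (x n) * pp (unit_seq n)) ->
  pp x <= Series (fun n => Cmod (x n) * pp (unit_seq n)).
Proof.
  intros Hx Hex. destruct (inLambda_step x Hx) as [j [B [Hj HB]]].
  destruct (tail_seminorm_le j Hj) as [E HE].
  destruct Hp as [[_ [Hpadd _]] _].
  apply (le_of_le_add_div _ _ (E * B)). intros N.
  rewrite (trunc_add_tail x N) at 1.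
  eapply Rle_trans; [apply Hpadd; [apply trunc_seq_inLambda|apply tail_seq_inLambda; auto]|].
  apply Rplus_le_compat; [|apply HE; auto].
  eapply Rle_trans; [apply seminorm_trunc_le, Hp|].
  apply psum_le_Series; auto. intros n. apply Rmult_le_pos; [apply Cmod_ge_0|apply unit_values_nonneg].
Qed.

Lemma unit_values_weighted_dom (m : nat) : forall j : nat, (1 <= j)%nat -> exists K, forall x B,
  wbound (M (INR j)) (INR j) x B ->
  forall n, Cmod (x n) * ((INR n + 1) ^ m * pp (unit_seq n)) <= / (INR n + 1) ^ 2 * (K * B).
Proof.
  intros j Hj. destruct (unit_values_decay j (m + 2) Hj) as [K HK].
  exists K. intros x B HB n. specialize (HK x B HB n).
  assert (Hn : 0 < (INR n + 1) ^ 2) by (apply pow_lt; generalize (pos_INR n); lra).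
  apply (Rmult_le_reg_l ((INR n + 1) ^ 2)); auto.
  replace ((INR n + 1) ^ 2 * (/ (INR n + 1) ^ 2 * (K * B))) with (K * B)
    by (field; generalize (pos_INR n); lra).
  rewrite pow_add in HK. eapply Rle_trans; [|apply HK]. right; ring.
Qed.

End ContinuousSeminorm.

Lemma nuclear_of_condition : Lambda_nuclear M.
Proof.
  intros pp Hp. set (pe n := pp (unit_seq n)).
  assert (Hpe := unit_values_nonneg pp Hp).
  assert (Hsq : forall n, 0 < (INR n + 1) ^ 2) by (intros n; apply pow_lt; generalize (pos_INR n); lra).
  set (w n := (INR n + 1) ^ 2 * pe n).
  assert (Hw : forall n, 0 <= w n) by (intros n; apply Rmult_le_pos; [apply Rlt_le, Hsq|apply Hpe]).
  assert (Hex_w := ex_series_weighted_l1 w Hw (unit_values_weighted_dom pp Hp 2)).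
  assert (Hex_pe : forall x, inLambda M x -> ex_series (fun n => Cmod (x n) * pe n)).
  { intros x Hx.
    assert (Hw0 : forall n, 0 <= (INR n + 1) ^ 0 * pe n) by (intros n; simpl; rewrite Rmult_1_l; apply Hpe).
    eapply ex_series_ext; [|apply (ex_series_weighted_l1 _ Hw0 (unit_values_weighted_dom pp Hp 0) x Hx)].
    intros n. simpl. ring. }
  exists (weighted_l1 w), (fun n x => Cmult (x n) (RtoC (pe n))), (fun n => / (INR n + 1) ^ 2).
  assert (Hf : forall x n, Cmod (Cmult (x n) (RtoC (pe n))) = Cmod (x n) * pe n)
    by (intros; rewrite Cmod_mult, Cmod_RtoC_nonneg; [|apply Hpe]; reflexivity).
  split; [|split; [|split; [|split; [|split]]]].
  - apply weighted_l1_cont_seminorm; auto. apply unit_values_weighted_dom; auto.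
  - intros n a x y _ _. ring.
  - intros n. apply Rlt_le, Rinv_0_lt_compat; auto.
  - apply ex_series_inv_sq.
  - intros n x Hx. rewrite Hf.
    replace (Cmod (x n) * pe n) with (/ (INR n + 1) ^ 2 * (Cmod (x n) * w n))
      by (unfold w; field; generalize (pos_INR n); lra).
    apply Rmult_le_compat_l; [apply Rlt_le, Rinv_0_lt_compat; auto|].
    apply (term_le_Series (fun k => Cmod (x k) * w k)); auto.
    intros k; apply Rmult_le_pos; [apply Cmod_ge_0|auto].
  - intros x Hx. split.
    + eapply ex_series_ext; [intros n; symmetry; apply Hf|]. auto.
    + rewrite (Series_ext _ _ (Hf x)). apply seminorm_le_l1; auto.
Qed.

End Sufficiency.

(** * Nuclearity implies the growth condition *)

Section SupSeminorm.
Variable v : nat -> R.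
Hypothesis v_nonneg : forall k, 0 <= v k.
Hypothesis v_dom : forall j : nat, (1 <= j)%nat ->
  exists C, 0 <= C /\ forall k, v k <= C * weight (INR j) (INR j) k.

Definition weighted_sup (x : cseq) : R := sup_real (fun k => Cmod (x k) * v k).

Lemma weighted_sup_terms_le (j : nat) C x B : (1 <= j)%nat -> 0 <= C ->
  (forall k, v k <= C * weight (INR j) (INR j) k) ->
  wbound (M (INR j)) (INR j) x B -> forall k, Cmod (x k) * v k <= C * B.
Proof.
  intros Hj HC Hv HB k. assert (Hj0 : 0 < INR j) by (apply lt_0_INR; lia).
  apply Rle_trans with (C * (Cmod (x k) * weight (INR j) (INR j) k)).
  - rewrite <- Rmult_assoc, (Rmult_comm C), Rmult_assoc.
    apply Rmult_le_compat_l; [apply Cmod_ge_0|auto].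
  - apply Rmult_le_compat_l; [auto|apply wbound_weight; auto].
Qed.

Lemma weighted_sup_bounded x : inLambda M x -> exists B, forall k, Cmod (x k) * v k <= B.
Proof.
  intros Hx. destruct (inLambda_step x Hx) as [j [B [Hj HB]]].
  destruct (v_dom j Hj) as [C [HC Hv]]. exists (C * B). apply (weighted_sup_terms_le j); auto.
Qed.

Lemma weighted_sup_ge x k : inLambda M x -> Cmod (x k) * v k <= weighted_sup x.
Proof. intros Hx. apply (sup_real_ub (fun k => Cmod (x k) * v k)), weighted_sup_bounded; auto. Qed.

Lemma weighted_sup_cont_seminorm : cont_seminorm M weighted_sup.
Proof.
  split; [split; [|split]|].
  - intros x Hx. eapply Rle_trans; [|apply (weighted_sup_ge x 0 Hx)].
    apply Rmult_le_pos; [apply Cmod_ge_0|auto].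
  - intros x y Hx Hy. apply sup_real_le. intros k.
    eapply Rle_trans; [apply Rmult_le_compat_r; [auto|apply Cmod_triangle]|].
    rewrite Rmult_plus_distr_r. apply Rplus_le_compat; apply weighted_sup_ge; auto.
  - intros a x Hx. unfold weighted_sup. rewrite <- sup_real_scal by (apply Cmod_ge_0 || apply weighted_sup_bounded; auto).
    f_equal. apply functional_extensionality. intros k. rewrite Cmod_mult. ring.
  - intros j Hj. destruct (v_dom j Hj) as [C [HC Hv]]. exists C. intros c B HB.
    apply sup_real_le. apply (weighted_sup_terms_le j); auto.
Qed.

End SupSeminorm.

Lemma unit_functional_psum_le (f : cseq -> C) (q : cseq -> R) (c Cq : R) (j : nat) :
  (1 <= j)%nat -> 0 <= c -> is_linear_functional M f ->
  (forall y, inLambda M y -> Cmod (f y) <= c * q y) ->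
  (forall y B, wbound (M (INR j)) (INR j) y B -> q y <= Cq * B) ->
  forall N, psum (fun k => Cmod (f (unit_seq k)) / weight (INR j) (INR j) k) N <= c * Cq.
Proof.
  intros Hj Hc Hf Hfq HqC N. assert (Hj0 : 0 < INR j) by (apply lt_0_INR; lia).
  set (W k := weight (INR j) (INR j) k).
  assert (HWk : forall k, 0 < W k) by (intros; apply weight_pos; auto).
  assert (Hterm : forall k, 0 <= Cmod (f (unit_seq k)) / W k)
    by (intros k; apply Rmult_le_pos; [apply Cmod_ge_0|apply Rlt_le, Rinv_0_lt_compat, HWk]).
  set (y := trunc_seq (fun k => Cmult (phase (f (unit_seq k))) (RtoC (/ W k))) N).
  assert (Hfy : f y = RtoC (psum (fun k => Cmod (f (unit_seq k)) / W k) N)).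
  { apply linear_functional_trunc; auto. intros k.
    rewrite <- Cmult_assoc, (Cmult_comm (RtoC _)), Cmult_assoc, phase_mul, <- RtoC_mult. auto. }
  assert (Hy : wbound (M (INR j)) (INR j) y 1).
  { apply weight_wbound; auto. intros k. unfold y, trunc_seq. destruct (Nat.ltb k N).
    - rewrite Cmod_mult, Cmod_RtoC_nonneg by (apply Rlt_le, Rinv_0_lt_compat, HWk).
      assert (Hph := Cmod_phase_le (f (unit_seq k))). assert (Hk := HWk k). fold (W k).
      rewrite Rmult_assoc, Rinv_l, Rmult_1_r by lra. auto.
    - rewrite Cmod_0, Rmult_0_l. lra. }
  assert (H := Hfq y (trunc_seq_inLambda _ N)). fold y in H.
  rewrite Hfy, Cmod_RtoC_nonneg in H by (apply psum_nonneg; auto).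
  eapply Rle_trans; [apply H|]. apply Rmult_le_compat_l; auto.
  specialize (HqC y 1 Hy). lra.
Qed.

Lemma summable_of_nuclear (v : nat -> R) : Lambda_nuclear M ->
  (forall k, 0 <= v k) ->
  (forall j : nat, (1 <= j)%nat -> exists C, 0 <= C /\ forall k, v k <= C * weight (INR j) (INR j) k) ->
  forall j : nat, (1 <= j)%nat -> exists S, forall N, psum (fun k => v k / weight (INR j) (INR j) k) N <= S.
Proof.
  intros Hnuc Hv0 Hv j Hj.
  destruct (Hnuc (weighted_sup v) (weighted_sup_cont_seminorm v Hv0 Hv))
    as [q [f [cn [[_ Hqc] [Hlin [Hc0 [Hcex [Hfq Hpf]]]]]]]].
  destruct (Hqc j Hj) as [Cq HCq]. assert (Hj0 : 0 < INR j) by (apply lt_0_INR; lia).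
  set (W k := weight (INR j) (INR j) k).
  assert (HWk : forall k, 0 < W k) by (intros; apply weight_pos; auto).
  set (g k n := Cmod (f n (unit_seq k)) / W k).
  assert (Hg : forall k, ex_series (g k)).
  { intros k. apply ex_series_scal_r. apply (Hpf (unit_seq k) (unit_seq_inLambda k)). }
  exists (Series (fun n => cn n * Cq)). intros N.
  destruct (Series_psum_comm g N Hg) as [Hex Heq].
  apply Rle_trans with (psum (fun k => Series (g k)) N).
  { apply psum_le. intros k _. unfold g, Rdiv. rewrite Series_scal_r.
    apply Rmult_le_compat_r; [apply Rlt_le, Rinv_0_lt_compat, HWk|].
    apply Rle_trans with (weighted_sup v (unit_seq k)); [|apply (proj2 (Hpf _ (unit_seq_inLambda k)))].
    generalize (weighted_sup_ge v Hv (unit_seq k) k (unit_seq_inLambda k)).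
    unfold unit_seq. rewrite Nat.eqb_refl, Cmod_1. lra. }
  rewrite Heq. apply Series_le; [|apply ex_series_scal_r; auto]. intros n. split.
  - apply psum_nonneg. intros k. apply Rmult_le_pos; [apply Cmod_ge_0|apply Rlt_le, Rinv_0_lt_compat, HWk].
  - apply (unit_functional_psum_le (f n) q); auto.
Qed.

Lemma block_weight_dominated (Nf : nat -> nat) :
  Nf 0%nat = 0%nat -> (forall m, (Nf m < Nf (S m))%nat) ->
  forall j : nat, (1 <= j)%nat -> exists C, 0 <= C /\ forall k,
    weight (INR (S (block_index Nf k))) (INR (S (block_index Nf k))) k
      <= C * weight (INR j) (INR j) k.
Proof.
  intros Nf0 Nf_lt j Hj. assert (Hj0 : 0 < INR j) by (apply lt_0_INR; lia).
  set (h k := weight 1 1 k / weight (INR j) (INR j) k).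
  assert (Hh : forall k, 0 <= h k)
    by (intros k; apply Rlt_le, Rdiv_lt_0_compat; apply weight_pos; lra).
  assert (Hsum := psum_nonneg h (Nf j) Hh).
  exists (1 + psum h (Nf j)). split; [lra|]. intros k.
  assert (HWj := weight_pos (INR j) (INR j) k Hj0 Hj0).
  assert (HJ : 1 <= INR (S (block_index Nf k))) by (apply (le_INR 1); lia).
  destruct (le_lt_dec (Nf j) k) as [hk|hk].
  - assert (Hjk := block_index_ge Nf Nf0 Nf_lt j k hk).
    assert (weight (INR (S (block_index Nf k))) (INR (S (block_index Nf k))) k <= weight (INR j) (INR j) k)
      by (apply weight_anti; auto; apply le_INR; lia).
    nra.
  - assert (weight (INR (S (block_index Nf k))) (INR (S (block_index Nf k))) k <= weight 1 1 k)
      by (apply weight_anti; lra).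
    assert (h k <= psum h (Nf j)) by (apply psum_ge_term; auto).
    assert (weight 1 1 k = h k * weight (INR j) (INR j) k) by (unfold h; field; lra).
    nra.
Qed.

(* A diagonal argument: if every ratio sum diverged, a weight [v] built from blocks of
   ever later steps would define a continuous sup-seminorm violating [summable_of_nuclear]. *)
Lemma summable_weight_ratio : Lambda_nuclear M -> forall lam, 0 < lam ->
  exists j : nat, (1 <= j)%nat /\ exists L, forall N,
    psum (fun k => weight (INR j) (INR j) k / weight lam 1 k) N <= L.
Proof.
  intros Hnuc lam Hl.
  set (r m k := weight (INR (S m)) (INR (S m)) k / weight lam 1 k).
  assert (Hr : forall m k, 0 <= r m k).
  { intros m k. apply Rlt_le, Rdiv_lt_0_compat; apply weight_pos; try lra; apply lt_0_INR; lia. }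
  apply NNPP. intros Hneg.
  assert (Hunb : forall m B, exists N, B < psum (r m) N).
  { intros m B. apply NNPP. intros H. apply Hneg. exists (S m). split; [lia|].
    exists B. intros N. apply Rnot_lt_le. intros H2. apply H. exists N. auto. }
  destruct (unbounded_psum_blocks r Hr Hunb) as [Nf [Nf0 [Nf_lt Hblock]]].
  set (v k := weight (INR (S (block_index Nf k))) (INR (S (block_index Nf k))) k).
  assert (Hv0 : forall k, 0 <= v k) by (intros k; apply Rlt_le, weight_pos; apply lt_0_INR; lia).
  destruct (exists_nat_ge1 (Rmax lam 1)) as [j0 [Hj0 Hj0r]].
  generalize (Rmax_l lam 1) (Rmax_r lam 1); intros.
  destruct (summable_of_nuclear v Hnuc Hv0 (block_weight_dominated Nf Nf0 Nf_lt) j0 Hj0) as [L HL].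
  set (u k := v k / weight lam 1 k).
  assert (Hup : forall N, psum u N <= L).
  { intros N. eapply Rle_trans; [|apply (HL N)]. apply psum_le. intros k _.
    apply Rmult_le_compat_l; auto.
    apply Rinv_le_contravar; [apply weight_pos; lra|]. apply weight_anti; lra. }
  assert (Hlow : forall m, INR m <= psum u (Nf m)).
  { induction m; [rewrite Nf0; simpl; lra|].
    assert (Hext : psum u (Nf (S m)) - psum u (Nf m) = psum (r m) (Nf (S m)) - psum (r m) (Nf m)).
    { apply psum_block_ext; [specialize (Nf_lt m); lia|]. intros k Hk.
      unfold u, v, r. rewrite (block_index_eq Nf Nf0 Nf_lt m k Hk). auto. }
    specialize (Hblock m). rewrite S_INR. lra. }
  destruct (nat_gt L) as [m Hm]. specialize (Hlow m). specialize (Hup (Nf m)). lra.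
Qed.

Lemma weight_doubling_le lam (j : nat) L : 0 < lam -> (1 <= j)%nat ->
  (forall N, psum (fun k => weight (INR j) (INR j) k / weight lam 1 k) N <= L) ->
  forall K, INR K * weight (INR j) (INR j) K <= L * weight lam 1 (K + K).
Proof.
  intros Hl Hj HL K. assert (Hj0 : 0 < INR j) by (apply lt_0_INR; lia).
  set (r k := weight (INR j) (INR j) k / weight lam 1 k).
  assert (Hr : forall k, 0 <= r k) by (intros; apply Rlt_le, Rdiv_lt_0_compat; apply weight_pos; lra).
  assert (HWl := weight_pos lam 1 (K + K) Hl ltac:(lra)).
  assert (Hblock : INR (K + K - K) * (weight (INR j) (INR j) K / weight lam 1 (K + K))
                   <= psum r (K + K) - psum r K).
  { apply psum_block_ge; [lia|]. intros k Hk. unfold r, Rdiv. apply Rmult_le_compat.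
    - apply Rlt_le, weight_pos; lra.
    - apply Rlt_le, Rinv_0_lt_compat, weight_pos; lra.
    - apply weight_mono; lia || lra.
    - apply Rinv_le_contravar; [apply weight_pos; lra|]. apply weight_mono; lia || lra. }
  replace (K + K - K)%nat with K in Hblock by lia.
  assert (psum r (K + K) <= L) by apply HL.
  assert (0 <= psum r K) by (apply psum_nonneg; auto).
  apply (Rmult_le_reg_r (/ weight lam 1 (K + K))); [apply Rinv_0_lt_compat; lra|].
  replace (L * weight lam 1 (K + K) * / weight lam 1 (K + K)) with L by (field; lra).
  unfold Rdiv in Hblock. rewrite Rmult_assoc. lra.
Qed.

Lemma pow_div_M_le_succ lam s r : 0 < lam -> 0 <= s -> M lam (S r) / M lam r <= s ->
  s ^ r / M lam r <= s ^ S r / M lam (S r).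
Proof.
  intros Hl Hs H. assert (Ha := M_pos lam r Hl). assert (Hb := M_pos lam (S r) Hl).
  assert (Hu : 0 <= s ^ r) by (apply pow_le; auto).
  apply (Rmult_le_compat_r (M lam r)) in H; [|lra].
  replace (M lam (S r) / M lam r * M lam r) with (M lam (S r)) in H by (field; lra).
  apply (Rmult_le_reg_r (M lam r * M lam (S r))); [nra|].
  replace (s ^ r / M lam r * (M lam r * M lam (S r))) with (s ^ r * M lam (S r)) by (field; lra).
  replace (s ^ S r / M lam (S r) * (M lam r * M lam (S r))) with (s ^ r * (s * M lam r))
    by (simpl; field; lra).
  apply Rmult_le_compat_l; auto.
Qed.

Lemma pow_div_M_succ_le lam s r : 0 < lam -> 0 <= s -> s <= M lam (S r) / M lam r ->
  s ^ S r / M lam (S r) <= s ^ r / M lam r.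
Proof.
  intros Hl Hs H. assert (Ha := M_pos lam r Hl). assert (Hb := M_pos lam (S r) Hl).
  assert (Hu : 0 <= s ^ r) by (apply pow_le; auto).
  apply (Rmult_le_compat_r (M lam r)) in H; [|lra].
  replace (M lam (S r) / M lam r * M lam r) with (M lam (S r)) in H by (field; lra).
  apply (Rmult_le_reg_r (M lam r * M lam (S r))); [nra|].
  replace (s ^ r / M lam r * (M lam r * M lam (S r))) with (s ^ r * M lam (S r)) by (field; lra).
  replace (s ^ S r / M lam (S r) * (M lam r * M lam (S r))) with (s ^ r * (s * M lam r))
    by (simpl; field; lra).
  apply Rmult_le_compat_l; auto.
Qed.

Section LogConvex.
Hypothesis Hlc : forall lam, 0 < lam -> forall p : nat, (1 <= p)%nat ->
  (M lam p) ^ 2 <= M lam (p - 1)%nat * M lam (p + 1)%nat.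

Lemma mu_le_succ lam r : 0 < lam ->
  M lam (S r) / M lam r <= M lam (S (S r)) / M lam (S r).
Proof.
  intros Hl. assert (H := Hlc lam Hl (S r) ltac:(lia)).
  replace (S r - 1)%nat with r in H by lia. replace (S r + 1)%nat with (S (S r)) in H by lia.
  assert (Ha := M_pos lam r Hl). assert (Hb := M_pos lam (S r) Hl).
  assert (Hc := M_pos lam (S (S r)) Hl).
  apply (Rmult_le_reg_r (M lam r * M lam (S r))); [nra|].
  replace (M lam (S r) / M lam r * (M lam r * M lam (S r))) with (M lam (S r) ^ 2) by (field; lra).
  replace (M lam (S (S r)) / M lam (S r) * (M lam r * M lam (S r)))
    with (M lam r * M lam (S (S r))) by (field; lra).
  lra.
Qed.

Lemma mu_mono lam a b : 0 < lam -> (a <= b)%nat ->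
  M lam (S a) / M lam a <= M lam (S b) / M lam b.
Proof. intros Hl. induction 1; [lra|]. eapply Rle_trans; [apply IHle|]. apply mu_le_succ; auto. Qed.

Lemma pow_div_M_max_at_mu lam p r : 0 < lam ->
  (M lam (S p) / M lam p) ^ r / M lam r <= (M lam (S p) / M lam p) ^ S p / M lam (S p).
Proof.
  intros Hl. set (s := M lam (S p) / M lam p).
  assert (Hs : 0 <= s) by (apply Rlt_le, Rdiv_lt_0_compat; apply M_pos; auto).
  destruct (le_lt_dec r (S p)) as [hr|hr].
  - assert (Hup : forall n r, (r + n = S p)%nat -> s ^ r / M lam r <= s ^ S p / M lam (S p)).
    { induction n as [|n IH]; intros r' Hr'.
      - replace r' with (S p) by lia. lra.
      - eapply Rle_trans; [|apply (IH (S r')); lia].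
        apply pow_div_M_le_succ; auto. apply mu_mono; auto; lia. }
    apply (Hup (S p - r)%nat r); lia.
  - replace r with (S p + (r - S p))%nat by lia. induction (r - S p)%nat as [|n IH].
    + rewrite Nat.add_0_r. lra.
    + eapply Rle_trans; [|apply IH]. replace (S p + S n)%nat with (S (S p + n)) by lia.
      apply pow_div_M_succ_le; auto. apply mu_mono; auto; lia.
Qed.

Lemma weight_le_at_mu lam p k : 0 < lam -> sqrt (INR k) <= M lam (S p) / M lam p ->
  weight lam 1 k <= (M lam (S p) / M lam p) ^ S p / M lam (S p).
Proof.
  intros Hl Hk. apply weight_le. intros r. eapply Rle_trans; [|apply pow_div_M_max_at_mu; auto].
  unfold wterm. replace (sqrt (INR k) / 1) with (sqrt (INR k)) by field. unfold Rdiv.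
  apply Rmult_le_compat_r; [apply Rlt_le, Rinv_0_lt_compat, M_pos; auto|].
  apply pow_incr. split; [apply sqrt_pos|auto].
Qed.

(* Evaluate the growth bound at [K ~ mu^2/2], bounding [weight j j K] below by its
   [p]-th term and [weight lam 1 (K + K)] above by its [(p+1)]-th term. *)
Lemma large_mu_bound lam (j : nat) L p : 0 < lam -> (1 <= j)%nat -> 0 <= L ->
  (forall K, INR K * weight (INR j) (INR j) K <= L * weight lam 1 (K + K)) ->
  2 <= M lam (S p) / M lam p ->
  M lam (S p) * (M lam (S p) / M lam p) <= 4 * L * (2 * INR j) ^ p * M (INR j) p.
Proof.
  intros Hl Hj HL HC Hs2. assert (Hj0 : 0 < INR j) by (apply lt_0_INR; lia).
  set (s := M lam (S p) / M lam p) in *. set (X := M lam (S p)). set (Y := M (INR j) p).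
  assert (HX : 0 < X) by (apply M_pos; auto). assert (HY : 0 < Y) by (apply M_pos; lra).
  destruct (nfloor_ex (s ^ 2 / 2)) as [K [HK1 HK2]]; [nra|].
  assert (HKK : INR (K + K) <= s ^ 2) by (rewrite plus_INR; lra).
  assert (HsK : s / 2 <= sqrt (INR K)).
  { rewrite <- (sqrt_pow2 (s / 2)) by lra. apply sqrt_le_1_alt. simpl in *. nra. }
  assert (HWl : weight lam 1 (K + K) <= s ^ S p / X).
  { apply weight_le_at_mu; auto. change (sqrt (INR (K + K)) <= s).
    rewrite <- (sqrt_pow2 s) by lra. apply sqrt_le_1_alt; auto. }
  assert (HWj : (s / (2 * INR j)) ^ p / Y <= weight (INR j) (INR j) K).
  { eapply Rle_trans; [|apply wterm_le_weight; auto]. unfold wterm. fold Y.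
    unfold Rdiv at 1 3. apply Rmult_le_compat_r; [apply Rlt_le, Rinv_0_lt_compat; auto|].
    apply pow_incr. split; [apply Rlt_le, Rdiv_lt_0_compat; lra|].
    replace (s / (2 * INR j)) with ((s / 2) / INR j) by (field; lra).
    apply Rmult_le_compat_r; [apply Rlt_le, Rinv_0_lt_compat|]; auto. }
  assert (Hmain : s ^ 2 / 4 * ((s / (2 * INR j)) ^ p / Y) <= L * (s ^ S p / X)).
  { apply Rle_trans with (INR K * weight (INR j) (INR j) K).
    - apply Rmult_le_compat; [nra| |nra|auto].
      apply Rmult_le_pos; [apply pow_le, Rlt_le, Rdiv_lt_0_compat; lra|].
      apply Rlt_le, Rinv_0_lt_compat; auto.
    - eapply Rle_trans; [apply HC|]. apply Rmult_le_compat_l; auto. }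
  set (u := s ^ p). set (w := (2 * INR j) ^ p).
  assert (Hu : 0 < u) by (apply pow_lt; lra). assert (Hw : 0 < w) by (apply pow_lt; lra).
  replace ((s / (2 * INR j)) ^ p) with (u / w) in Hmain
    by (unfold u, w, Rdiv; rewrite (Rpow_mult_distr s (/ (2 * INR j))), pow_inv; auto).
  replace (s ^ S p) with (s * u) in Hmain by (unfold u; simpl; ring).
  apply (Rmult_le_compat_r (4 * w * Y * X / (s * u))) in Hmain.
  2: { apply Rlt_le, Rdiv_lt_0_compat; [|nra]. repeat apply Rmult_lt_0_compat; lra. }
  replace (s ^ 2 / 4 * (u / w / Y) * (4 * w * Y * X / (s * u))) with (X * s) in Hmain
    by (simpl; field; repeat split; lra).
  replace (L * (s * u / X) * (4 * w * Y * X / (s * u))) with (4 * L * w * Y) in Hmain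
    by (field; repeat split; lra).
  auto.
Qed.

Lemma condition_of_weight_growth lam (j : nat) L : 0 < lam -> (1 <= j)%nat -> lam <= INR j ->
  0 <= L -> (forall K, INR K * weight (INR j) (INR j) K <= L * weight lam 1 (K + K)) ->
  forall p, M lam (S p) <= ((2 + 2 * L) * (2 * INR j)) ^ S p * M (INR j) p.
Proof.
  intros Hl Hj Hlj HL HC p. assert (Hj1 : 1 <= INR j) by (apply (le_INR 1); lia).
  set (X := M lam (S p)). set (Y := M (INR j) p). set (s := X / M lam p).
  assert (HX : 0 < X) by (apply M_pos; auto). assert (HY : 0 < Y) by (apply M_pos; lra).
  assert (HMp := M_pos lam p Hl). assert (HMY : M lam p <= Y) by (apply M_le; auto).
  assert (Hw : 1 <= (2 * INR j) ^ p) by (apply pow_R1_Rle; lra).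
  assert (HA : (2 + 2 * L) * (2 * INR j) ^ p <= ((2 + 2 * L) * (2 * INR j)) ^ S p).
  { rewrite (Rpow_mult_distr (2 + 2 * L) (2 * INR j)). apply Rmult_le_compat; try lra.
    - rewrite <- (pow_1 (2 + 2 * L)) at 1. apply Rle_pow; [lra|lia].
    - apply Rle_pow; [lra|lia]. }
  apply Rle_trans with ((2 + 2 * L) * (2 * INR j) ^ p * Y); [|apply Rmult_le_compat_r; lra].
  assert (HXs : X = s * M lam p) by (unfold s; field; lra).
  destruct (Rlt_or_le s 2) as [hs|hs].
  - assert (X < 2 * M lam p) by (rewrite HXs; apply Rmult_lt_compat_r; lra).
    assert (2 <= (2 + 2 * L) * (2 * INR j) ^ p) by nra.
    nra.
  - assert (H := large_mu_bound lam j L p Hl Hj HL HC hs). fold X Y s in H.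
    assert (2 * X <= 4 * L * (2 * INR j) ^ p * Y) by nra.
    nra.
Qed.

Lemma condition_of_nuclear : Lambda_nuclear M -> forall lam, 0 < lam ->
  exists kap A, lam <= kap /\ 1 <= A /\
    forall p : nat, M lam (p + 1)%nat <= A ^ (p + 1) * M kap p.
Proof.
  intros Hnuc lam Hl.
  destruct (summable_weight_ratio Hnuc lam Hl) as [j [Hj [L HL]]].
  destruct (exists_nat_ge1 lam) as [j0 [Hj0 Hj0l]].
  set (j2 := Nat.max j j0).
  assert (Hj2 : (1 <= j2)%nat) by lia.
  assert (Hjj2 : INR j <= INR j2) by (apply le_INR; lia).
  assert (Hj0j2 : INR j0 <= INR j2) by (apply le_INR; lia).
  assert (Hj1 : 1 <= INR j) by (apply (le_INR 1); lia).
  assert (HL2 : forall N, psum (fun k => weight (INR j2) (INR j2) k / weight lam 1 k) N <= Rmax L 0).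
  { intros N. eapply Rle_trans; [|eapply Rle_trans; [apply (HL N)|apply Rmax_l]].
    apply psum_le. intros k _. apply Rmult_le_compat_r.
    - apply Rlt_le, Rinv_0_lt_compat, weight_pos; lra.
    - apply weight_anti; lra. }
  assert (HC := weight_doubling_le lam j2 (Rmax L 0) Hl Hj2 HL2).
  exists (INR j2), ((2 + 2 * Rmax L 0) * (2 * INR j2)).
  split; [lra|]. split; [generalize (Rmax_r L 0); nra|].
  intros p. rewrite Nat.add_1_r. apply (condition_of_weight_growth lam j2); auto; [lra|apply Rmax_r].
Qed.

End LogConvex.

End WeightMatrix.

Theorem theorem5p8 (M : wmatrix) :
  is_weight_matrix M ->
  (forall lam, 0 < lam -> forall p : nat, (1 <= p)%nat ->
     (M lam p) ^ 2 <= M lam (p - 1)%nat * M lam (p + 1)%nat) ->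
  (forall lam, 0 < lam ->
     is_lim_seq (fun p : nat => Rpower (M lam p) (/ INR p)) p_infty) ->
  (forall lam kap, 0 < lam -> lam <= kap -> forall p : nat, (1 <= p)%nat ->
     M lam p / M lam (p - 1)%nat <= M kap p / M kap (p - 1)%nat) ->
  (Lambda_nuclear M <->
   forall lam, 0 < lam ->
     exists kap A, lam <= kap /\ 1 <= A /\
       forall p : nat, M lam (p + 1)%nat <= A ^ (p + 1) * M kap p).
Proof.
  intros HW Hlc Hlim _. split.
  - exact (condition_of_nuclear M HW Hlim Hlc).
  - exact (nuclear_of_condition M HW Hlim).
Qed.
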